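(* Let $b>0$ and let $f:[0,b]\to[0,\infty)$ be concave with $f(b)=0$, $f(0)>0$ and $\max_{[0,b]}f=f(0)$. Then $$\int_0^b\exp\left(-\frac{x^2+f(x)^2}{2}\right)\sqrt{1+f'(x)^2}\,dx\le\sqrt{\pi}.$$
   Context: Here $f'$ exists almost everywhere since $f$ is concave, and the integral is the (unnormalized) Gaussian length of the graph of $f$ over $[0,b]$. *)

From HB Require Import structures.
From mathcomp Require Import all_boot all_order all_algebra.
From mathcomp Require Import all_classical all_reals all_analysis.
Set Implicit Arguments. Unset Strict Implicit. Unset Printing Implicit Defensive.
Import Order.TTheory GRing.Theory Num.Theory.
Local Open Scope ring_scope.
Local Open Scope classical_set_scope.

Definition concave_on (R : realType) (a b : R) (f : R -> R) : Prop :=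
  forall x y t : R, a <= x <= b -> a <= y <= b -> 0 <= t <= 1 ->
    (1 - t) * f x + t * f y <= f ((1 - t) * x + t * y).

(* Write [E t = exp (- t^2 / 2)] and [G t = \int_0^t E], so that the integrand
   is [E x * E (f x) * sqrt (1 + f'(x)^2)].  Cut [[0, b)] at the points
   [x_k = b - b rho^k] (0 < rho < 1).  Concavity makes the chord slopes [s_k] of
   [f] over [[x_k, x_(k+1)]] nondecreasing and bounds [|f'|] on [[x_k, x_(k+1))]
   by [s_(k+1)], so the integral is at most the sum of the terms
   [E x_k * E (f x_(k+1)) * sqrt (1 + s_(k+1)^2) * (x_(k+1) - x_k)].  While
   [s_(k+1) <= 1] these telescope, up to [sqrt 2], into increments of [G]
   along the abscissae; once [s_(k+1) > 1] they telescope, up to [sqrt 2 / rho],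
   into increments of [G] along the values of [f].  Up to an error
   [b * (1 - rho)], the two parts are bounded by the two-point inequality
   [E v * G u + E u * G v <= sqrt (pi / 2)], a consequence of Pólya's bound
   [G u^2 <= pi / 2 * (1 - E u^2)].  Letting [rho] tend to [1] yields
   [sqrt 2 * sqrt (pi / 2) = sqrt pi]. *)

From HB Require Import structures.
From mathcomp Require Import all_boot all_order all_algebra.
From mathcomp Require Import all_classical all_reals all_analysis.
From mathcomp Require Import measurable_realfun ring lra.
Import Order.TTheory GRing.Theory Num.Theory.
Import numFieldNormedType.Exports.
Local Open Scope ring_scope.
Local Open Scope classical_set_scope.
Set Implicit Arguments. Unset Strict Implicit. Unset Printing Implicit Defensive.

(** * Estimates on the Gaussian integral *)

Lemma derive_ge0_le (R : realType) (F dF : R -> R) a c : a <= c ->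
  {within `[a, c], continuous F} ->
  (forall x, x \in `]a, c[%R -> is_derive x 1 F (dF x)) ->
  (forall x, x \in `]a, c[%R -> 0 <= dF x) -> F a <= F c.
Proof.
rewrite le_eqVlt => /predU1P[-> //|ac] cF dF_F dF_ge0.
have [x xac FcFa] := MVT ac dF_F cF.
by rewrite -subr_ge0 FcFa mulr_ge0 ?dF_ge0// subr_ge0 ltW.
Qed.

Lemma derive_le0_ge (R : realType) (F dF : R -> R) a c : a <= c ->
  {within `[a, c], continuous F} ->
  (forall x, x \in `]a, c[%R -> is_derive x 1 F (dF x)) ->
  (forall x, x \in `]a, c[%R -> dF x <= 0) -> F c <= F a.
Proof.
move=> ac cF dF_F dF_le0; rewrite -lerN2.
apply: (@derive_ge0_le _ (- F) (fun x => - dF x)) => //.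
- by move=> x; apply: continuousN; exact: cF.
- by move=> x /dF_F dFx; exact: is_deriveN.
- by move=> x /dF_le0; rewrite oppr_ge0.
Qed.

Arguments derive_ge0_le {R F} dF {a c}.
Arguments derive_le0_ge {R F} dF {a c}.

Section gauss_bounds.
Context {R : realType}.
Local Notation I := (@gauss_integral_proof.integral0_gauss R).

Lemma is_derive_gauss_fun (x : R) :
  is_derive x 1 gauss_fun (- 2 * x * gauss_fun x).
Proof.
have dsq : is_derive x 1 (fun y : R => - y ^+ 2) (- 2 * x).
  by apply: is_derive_eq; rewrite /GRing.scale /=; ring.
have := @is_derive1_comp _ expR (fun y => - y ^+ 2) x _ _ (is_derive_expR _) dsq.
by move/is_derive_eq; apply; rewrite /gauss_fun; ring.
Qed.

Lemma integral0_gauss0 : I 0 = 0.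
Proof. by rewrite /gauss_integral_proof.integral0_gauss set_itv1 Rintegral_set1. Qed.

Lemma continuous_integral0_gauss (a c : R) : 0 <= a ->
  {within `[a, c], continuous I}.
Proof.
move=> a0; have [ac|ca] := leP a c; last first.
  by rewrite set_itv_ge -?leNgt ?bnd_simp//; exact: continuous_subspace0.
apply: (@continuous_subspaceW _ _ _ `[0, c]).
  by apply: subset_itv; rewrite bnd_simp.
apply: parameterized_integral_continuous; first exact: le_trans ac.
apply: continuous_compact_integrable; first exact: segment_compact.
by apply: continuous_subspaceT; exact: continuous_gauss_fun.
Qed.

Lemma is_derive_integral0_gauss (x : R) : 0 < x -> is_derive x 1 I (gauss_fun x).
Proof.
move=> x0.
have [dI dIE] : derivable I x 1 /\ I^`() x = gauss_fun x.
  apply: (@continuous_FTC1 R gauss_fun (BLeft 0) x (x + 1)).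
  - by rewrite ltrDl.
  - apply: continuous_compact_integrable; first exact: segment_compact.
    exact/continuous_subspaceT/continuous_gauss_fun.
  - by rewrite /= lte_fin.
  - exact: continuous_gauss_fun.
by rewrite -dIE derive1E; exact: derivableP.
Qed.

Lemma gauss_fun_gt0 (x : R) : 0 < gauss_fun x.
Proof. exact: expR_gt0. Qed.

Lemma gauss_fun_le (x y : R) : 0 <= x -> x <= y -> gauss_fun y <= gauss_fun x.
Proof.
move=> x0 xy; rewrite ler_expR lerN2 ler_sqr// nnegrE.
exact: le_trans xy.
Qed.

(* Pólya's bound on [I x ^+ 2]: [gap] vanishes at [0] and at [+oo], and
   [gap' = gauss_fun * gap_rate] where [gap_rate 0 = 0] and [gap_rate] stays
   negative once it is; hence [gap] first increases and then decreases. *)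
Let gap x := pi / 4 * (1 - gauss_fun x * gauss_fun x) - I x * I x.
Let gap_rate x := pi * x * gauss_fun x - 2 * I x.

Let continuous_gap (a c : R) : 0 <= a -> {within `[a, c], continuous gap}.
Proof.
move=> a0 x.
apply: (@continuousB _ _ (subspace `[a, c])
  (fun y => pi / 4 * (1 - gauss_fun y * gauss_fun y)) (fun y => I y * I y)).
  apply: continuous_subspaceT => y.
  apply: cvgM; first exact: cvg_cst.
  apply: cvgB; first exact: cvg_cst.
  by apply: cvgM; exact: continuous_gauss_fun.
have cI := @continuous_integral0_gauss a c a0 x.
exact: (@continuousM _ (subspace `[a, c]) I I x cI cI).
Qed.

Let continuous_gap_rate (a c : R) : 0 <= a -> {within `[a, c], continuous gap_rate}.
Proof.
move=> a0 x.
apply: (@continuousB _ _ (subspace `[a, c])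
  (fun y => pi * y * gauss_fun y) (fun y => 2 * I y)).
  apply: continuous_subspaceT => y.
  apply: cvgM; last exact: continuous_gauss_fun.
  by apply: cvgM; [exact: cvg_cst|exact: cvg_id].
apply: (@continuousM _ (subspace `[a, c]) (cst 2) I); first exact: cvg_cst.
exact: continuous_integral0_gauss.
Qed.
Let is_derive_gap (x : R) : 0 < x -> is_derive x 1 gap (gauss_fun x * gap_rate x).
Proof.
move=> x0; have dg := is_derive_gauss_fun x; have dI := is_derive_integral0_gauss x0.
by rewrite /gap; apply: is_derive_eq; rewrite /gap_rate /GRing.scale /=; field.
Qed.

Let is_derive_gap_rate (x : R) : 0 < x ->
  is_derive x 1 gap_rate (gauss_fun x * (pi - 2 - 2 * pi * x ^+ 2)).
Proof.
move=> x0; have dg := is_derive_gauss_fun x; have dI := is_derive_integral0_gauss x0.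
by rewrite /gap_rate; apply: is_derive_eq; rewrite /GRing.scale /=; ring.
Qed.

Let gauss_fun0 : gauss_fun 0 = 1 :> R.
Proof. by rewrite /gauss_fun expr0n oppr0 expR0. Qed.

Let gap_cvg0 : gap x @[x --> +oo] --> 0.
Proof.
have -> : 0 = pi / 4 * (1 - 0 * 0) - pi / 4 :> R by ring.
apply: cvgB.
  apply: cvgM; first exact: cvg_cst.
  by apply: cvgB; [exact: cvg_cst|exact: cvgM cvg_gauss_fun cvg_gauss_fun].
by under eq_fun do rewrite -expr2; exact: gauss_integral_proof.cvg_integral0_gauss_sqr.
Qed.

(* [gap_rate'] has the sign of [pi - 2 - 2 * pi * x ^+ 2], which decreases on
   [[0, +oo[]. *)
Let gap_rate_lt0_stable (y z : R) : 0 <= y -> y <= z -> gap_rate y < 0 -> gap_rate z < 0.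
Proof.
move=> y0 yz ky; rewrite ltNge; apply/negP => kz.
have {}yz : y < z.
  by rewrite lt_neqAle yz andbT; apply: contraTneq kz => <-; rewrite -ltNge.
have [t /[!in_itv]/= /andP[yt tz] dk] : exists2 t, t \in `]y, z[%R &
    gap_rate z - gap_rate y = gauss_fun t * (pi - 2 - 2 * pi * t ^+ 2) * (z - y).
  have := @MVT _ gap_rate (fun t => gauss_fun t * (pi - 2 - 2 * pi * t ^+ 2)) y z yz.
  apply; last exact: continuous_gap_rate.
  move=> s /[!in_itv]/= /andP[ys _].
  exact/is_derive_gap_rate/(le_lt_trans y0).
have qt : 0 < pi - 2 - 2 * pi * t ^+ 2.
  have : 0 < gauss_fun t * (pi - 2 - 2 * pi * t ^+ 2) * (z - y) by rewrite -dk; lra.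
  have zy : 0 < z - y by rewrite subr_gt0.
  by rewrite (pmulr_lgt0 _ zy) (pmulr_rgt0 _ (gauss_fun_gt0 t)).
suff : gap_rate 0 <= gap_rate y.
  by rewrite {1}/gap_rate integral0_gauss0 !(mulr0, mul0r) subr0; lra.
apply: (derive_ge0_le (fun s => gauss_fun s * (pi - 2 - 2 * pi * s ^+ 2)))
  y0 (@continuous_gap_rate 0 y (lexx 0)) _ _ => s /[!in_itv]/= /andP[s0 sy].
  exact: is_derive_gap_rate.
apply: mulr_ge0; first exact/ltW/gauss_fun_gt0.
have : s ^+ 2 <= t ^+ 2 by rewrite ler_sqr ?nnegrE; lra.
have := pi_gt0 R; nra.
Qed.

Lemma integral0_gauss_sqr_le (x : R) : 0 <= x ->
  I x ^+ 2 <= pi / 4 * (1 - gauss_fun x ^+ 2).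
Proof.
move=> x0; suff : 0 <= gap x by rewrite /gap !expr2 subr_ge0.
have [[y /[!in_itv]/= /andP[y0 yx] ky]|] :=
  pselect (exists2 y, y \in `]0, x[%R & gap_rate y < 0).
  apply: (cvgr_to_le gap_cvg0); near=> t.
  apply: (derive_le0_ge (fun s => gauss_fun s * gap_rate s)) _ (@continuous_gap x t x0) _ _
    => [|s /[!in_itv]/= /andP[xs st]|s /[!in_itv]/= /andP[xs st]].
  - by near: t; apply: nbhs_pinfty_ge; rewrite num_real.
  - exact/is_derive_gap/(le_lt_trans x0).
  - rewrite pmulr_rle0 ?gauss_fun_gt0//.
    by apply/ltW/(gap_rate_lt0_stable (ltW y0)) => //; lra.
move=> nk; have <- : gap 0 = 0 by rewrite /gap gauss_fun0 integral0_gauss0; ring.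
apply: (derive_ge0_le (fun s => gauss_fun s * gap_rate s)) x0
  (@continuous_gap 0 x (lexx 0)) _ _ => s /[!in_itv]/= /andP[s0 sx].
  exact: is_derive_gap.
rewrite mulr_ge0 ?(ltW (gauss_fun_gt0 _))// leNgt; apply/negP => ks.
by apply: nk; exists s; rewrite ?in_itv/= ?s0.
Unshelve. all: end_near. Qed.

Lemma integral0_gauss_increment (u v : R) : 0 <= u -> u <= v ->
  (v - u) * gauss_fun v <= I v - I u.
Proof.
move=> u0 uv.
suff : I u - u * gauss_fun v <= I v - v * gauss_fun v by rewrite mulrBl; lra.
apply: (@derive_ge0_le _ (fun t => I t - t * gauss_fun v)
  (fun t => gauss_fun t - gauss_fun v) _ _ uv) => [x||].
- apply: (@continuousB _ _ (subspace `[u, v]) I (fun t => t * gauss_fun v)).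
    exact: continuous_integral0_gauss.
  by apply: continuous_subspaceT => y; apply: cvgM; [exact: cvg_id|exact: cvg_cst].
- move=> t /[!in_itv]/= /andP[ut _]; have t0 : 0 < t by exact: le_lt_trans ut.
  have dI := is_derive_integral0_gauss t0.
  by apply: is_derive_eq; rewrite /GRing.scale /=; ring.
- move=> t /[!in_itv]/= /andP[ut tv].
  by rewrite subr_ge0 gauss_fun_le// ?ltW//; exact: le_lt_trans ut.
Qed.

End gauss_bounds.

Section std_gauss.
Context {R : realType}.
Local Notation I := (@gauss_integral_proof.integral0_gauss R).

Definition std_gauss (t : R) := expR (- (t ^+ 2 / 2)).

(* [\int_0^t std_gauss], after the substitution [s = sqrt 2 * s']. *)
Definition std_gauss_int (t : R) := Num.sqrt 2 * I (t / Num.sqrt 2).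

Let sqr_sqrt2 : Num.sqrt (2 : R) ^+ 2 = 2. Proof. by rewrite sqr_sqrtr. Qed.

Let gauss_fun_std_gauss t : gauss_fun (t / Num.sqrt 2) = std_gauss t.
Proof. by rewrite /gauss_fun /std_gauss exprMn exprVn sqr_sqrt2. Qed.

Lemma std_gauss_ge0 t : 0 <= std_gauss t. Proof. exact: expR_ge0. Qed.

Lemma std_gauss_le1 t : std_gauss t <= 1.
Proof. by rewrite -expR0 ler_expR lerNl oppr0 divr_ge0// sqr_ge0. Qed.

Lemma std_gauss0 : std_gauss 0 = 1.
Proof. by rewrite /std_gauss expr0n /= mul0r oppr0 expR0. Qed.

Lemma std_gauss_le u v : 0 <= u -> u <= v -> std_gauss v <= std_gauss u.
Proof.
move=> u0 uv; rewrite -!gauss_fun_std_gauss gauss_fun_le ?ler_pM2r ?invr_gt0//.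
exact: divr_ge0.
Qed.

Lemma std_gauss_int0 : std_gauss_int 0 = 0.
Proof. by rewrite /std_gauss_int mul0r integral0_gauss0 mulr0. Qed.

Lemma std_gauss_int_increment u v : 0 <= u -> u <= v ->
  (v - u) * std_gauss v <= std_gauss_int v - std_gauss_int u.
Proof.
move=> u0 uv; rewrite /std_gauss_int -mulrBr -gauss_fun_std_gauss.
have -> : v - u = Num.sqrt 2 * (v / Num.sqrt 2 - u / Num.sqrt 2).
  by field; rewrite gt_eqF.
rewrite -mulrA ler_pM2l// integral0_gauss_increment ?divr_ge0//.
by rewrite ler_pM2r ?invr_gt0.
Qed.

Lemma std_gauss_int_le u v : 0 <= u -> u <= v -> std_gauss_int u <= std_gauss_int v.
Proof.
move=> u0 uv; rewrite -subr_ge0; apply: le_trans (std_gauss_int_increment u0 uv).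
by rewrite mulr_ge0 ?std_gauss_ge0// subr_ge0.
Qed.

Lemma std_gauss_int_ge0 u : 0 <= u -> 0 <= std_gauss_int u.
Proof. by move=> u0; rewrite -std_gauss_int0 std_gauss_int_le. Qed.

Lemma std_gauss_int_sqr_le u : 0 <= u ->
  std_gauss_int u ^+ 2 <= pi / 2 * (1 - std_gauss u ^+ 2).
Proof.
move=> u0; rewrite /std_gauss_int exprMn sqr_sqrt2 -gauss_fun_std_gauss.
have -> : pi / 2 * (1 - gauss_fun (u / Num.sqrt 2) ^+ 2) =
  2 * (pi / 4 * (1 - gauss_fun (u / Num.sqrt 2) ^+ 2)) :> R by field.
by rewrite ler_pM2l// integral0_gauss_sqr_le// divr_ge0.
Qed.

Lemma std_gauss_two_point u v : 0 <= u -> 0 <= v ->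
  std_gauss v * std_gauss_int u + std_gauss u * std_gauss_int v <= Num.sqrt (pi / 2).
Proof.
move=> u0 v0; set K := Num.sqrt (pi / 2 : R).
have K0 : 0 < K by rewrite sqrtr_gt0 divr_gt0// pi_gt0.
have int_le t : 0 <= t -> std_gauss_int t <= K * Num.sqrt (1 - std_gauss t ^+ 2).
  move=> t0; rewrite -ler_sqr ?nnegrE ?std_gauss_int_ge0 ?mulr_ge0 ?sqrtr_ge0 ?(ltW K0)//.
  rewrite [leRHS]exprMn !sqr_sqrtr ?divr_ge0 ?pi_ge0 ?std_gauss_int_sqr_le//.
  by rewrite subr_ge0 expr_le1 ?std_gauss_ge0 ?std_gauss_le1.
(* [(std_gauss u, X)] and [(std_gauss v, Y)] are unit vectors. *)
set X := Num.sqrt (1 - std_gauss u ^+ 2); set Y := Num.sqrt (1 - std_gauss v ^+ 2).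
have unit_vec t : Num.sqrt (1 - std_gauss t ^+ 2) ^+ 2 = 1 - std_gauss t ^+ 2.
  by rewrite sqr_sqrtr// subr_ge0 expr_le1 ?std_gauss_ge0 ?std_gauss_le1.
have XY : std_gauss v * X + std_gauss u * Y <= 1.
  have := sqr_ge0 (std_gauss v - X); have := sqr_ge0 (std_gauss u - Y).
  have := unit_vec u; have := unit_vec v; rewrite -/X -/Y; nra.
apply: le_trans (_ : std_gauss v * (K * X) + std_gauss u * (K * Y) <= _).
  by apply: lerD; apply: ler_wpM2l; rewrite ?std_gauss_ge0 ?int_le.
by rewrite mulrCA [_ * (K * Y)]mulrCA -mulrDr ler_piMr// ltW.
Qed.

End std_gauss.

(** * Slopes of a concave function *)

Definition slope (R : realType) (f : R -> R) (x y : R) := (f y - f x) / (y - x).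

Lemma derive1_ncvg (R : realType) (f : R -> R) x :
  ~ cvg ((fun h => h^-1 *: (f (h + x) - f x)) @ 0^') -> derive1 f x = 0.
Proof.
move=> ncvg; rewrite /derive1 /lim /lim_in xgetPN// => l fl.
by apply: ncvg; apply/cvg_ex; exists l.
Qed.

Section concave_slopes.
Variables (R : realType) (b : R) (f : R -> R).
Hypothesis f_concave : concave_on 0 b f.

Lemma concave_slope_le x y z : 0 <= x -> x < y -> y < z -> z <= b ->
  slope f x z <= slope f x y /\ slope f y z <= slope f x z.
Proof.
move=> x0 xy yz zb; have zx : 0 < z - x by rewrite subr_gt0 (lt_trans xy).
pose t := (y - x) / (z - x).
have t01 : 0 <= t <= 1 by rewrite divr_ge0 ?ler_pdivrMr//= ?mul1r; lra.
have xb : 0 <= x <= b by lra.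
have zb' : 0 <= z <= b by lra.
have := f_concave xb zb' t01.
have -> : (1 - t) * x + t * z = y by rewrite /t; field; rewrite gt_eqF.
rewrite -(ler_pM2r zx).
have -> : ((1 - t) * f x + t * f z) * (z - x) = (z - y) * f x + (y - x) * f z.
  by rewrite /t; field; rewrite gt_eqF.
move=> fy; rewrite /slope; split.
  by rewrite ler_pdivrMr// mulrAC ler_pdivlMr ?subr_gt0//; lra.
by rewrite ler_pdivrMr ?subr_gt0// mulrAC ler_pdivlMr ?subr_gt0//; lra.
Qed.

Hypothesis f_max0 : forall x, 0 <= x <= b -> f x <= f 0.

Lemma concave_slope_le0 x y : 0 <= x -> x < y -> y <= b -> slope f x y <= 0.
Proof.
have slope0 z : 0 < z -> z <= b -> slope f 0 z <= 0.
  move=> z0 zb; rewrite /slope subr0 pmulr_lle0 ?invr_gt0// subr_le0.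
  by apply: f_max0; lra.
rewrite le_eqVlt => /predU1P[<- xy yb|x0 xy yb]; first exact: slope0.
have [_ +] := concave_slope_le (lexx 0) x0 xy yb.
by move/le_trans; apply; apply: slope0 => //; lra.
Qed.

Lemma concave_nonincreasing x y : 0 <= x -> x <= y -> y <= b -> f y <= f x.
Proof.
move=> x0; rewrite le_eqVlt => /predU1P[->//|xy yb].
have := concave_slope_le0 x0 xy yb.
by rewrite /slope pmulr_lle0 ?invr_gt0 ?subr_gt0// subr_le0.
Qed.

Lemma concave_diff_quotient_bounds x y1 y2 h : 0 < x -> x < y1 -> y1 < y2 -> y2 <= b ->
  h != 0 -> `|h| < Num.min x (y1 - x) ->
  slope f y1 y2 <= h^-1 * (f (h + x) - f x) <= 0.
Proof.
move=> x0 xy1 y12 y2b h0; rewrite lt_min => /andP[hx hy].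
have y1b : y1 <= b by lra.
have sy : slope f y1 y2 <= slope f x y1.
  have [a1 a2] := concave_slope_le (ltW x0) xy1 y12 y2b.
  exact: le_trans a2 a1.
have [hp|hn] := ltP 0 h.
  have -> : h^-1 * (f (h + x) - f x) = slope f x (h + x) by rewrite /slope addrK mulrC.
  rewrite gtr0_norm// in hy; have hx1 : h + x < y1 by lra.
  have xhx : x < h + x by lra.
  rewrite concave_slope_le0 ?andbT; [|lra|lra|lra].
  have [a1 _] := concave_slope_le (ltW x0) xhx hx1 y1b.
  exact: le_trans sy a1.
have {hn h0}hn : h < 0 by rewrite lt_neqAle h0 hn.
have -> : h^-1 * (f (h + x) - f x) = slope f (h + x) x.
  by rewrite /slope; field; rewrite gt_eqF ?lt_eqF//; lra.
rewrite ltr0_norm// in hx; have hx0 : 0 < h + x by lra.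
have hxx : h + x < x by lra.
rewrite concave_slope_le0 ?andbT; [|lra|lra|lra].
have [a1 a2] := concave_slope_le (ltW hx0) hxx xy1 y1b.
exact: le_trans sy (le_trans a2 a1).
Qed.

Lemma concave_derive1_sqr_le x y1 y2 : 0 < x -> x < y1 -> y1 < y2 -> y2 <= b ->
  derive1 f x ^+ 2 <= slope f y1 y2 ^+ 2.
Proof.
move=> x0 xy1 y12 y2b.
have [cv|ncv] := pselect (cvg ((fun h => h^-1 *: (f (h + x) - f x)) @ 0^')); last first.
  by rewrite derive1_ncvg// expr0n sqr_ge0.
have bounds : \forall h \near 0^', slope f y1 y2 <= h^-1 *: (f (h + x) - f x) <= 0.
  have m0 : 0 < Num.min x (y1 - x) by rewrite lt_min x0 subr_gt0 xy1.
  near=> h; apply: concave_diff_quotient_bounds => //.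
    by near: h; exact: nbhs_dnbhs_neq.
  by near: h; exact: dnbhs0_lt.
have lb : slope f y1 y2 <= derive1 f x.
  by apply: limr_ge => //; apply: filterS bounds => h /andP[].
have ub : derive1 f x <= 0 by apply: limr_le => //; apply: filterS bounds => h /andP[].
rewrite !expr2; nra.
Unshelve. all: end_near. Qed.

End concave_slopes.

(** * Bounding the density on a geometric partition of [[0, b]] *)

Definition gauss_length_density (R : realType) (f : R -> R) (x : R) :=
  expR (- ((x ^+ 2 + f x ^+ 2) / 2)) * Num.sqrt (1 + derive1 f x ^+ 2).

Lemma gauss_length_density_ge0 (R : realType) (f : R -> R) x :
  0 <= gauss_length_density f x.
Proof. by rewrite mulr_ge0 ?expR_ge0 ?sqrtr_ge0. Qed.

Section geometric_partition.
Variables (R : realType) (b rho : R) (f : R -> R).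
Hypotheses (b0 : 0 < b) (rho0 : 0 < rho) (rho1 : rho < 1).

Definition part_pt k := b - b * rho ^+ k.
Definition part_len k := b * rho ^+ k * (1 - rho).

Lemma part_ptS k : part_pt k.+1 - part_pt k = part_len k.
Proof. by rewrite /part_pt /part_len exprS; ring. Qed.

Lemma part_len_gt0 k : 0 < part_len k.
Proof. by rewrite /part_len !mulr_gt0 ?exprn_gt0 ?subr_gt0. Qed.

Lemma part_lenS k : part_len k.+1 = rho * part_len k.
Proof. by rewrite /part_len exprS; ring. Qed.

Lemma part_len_le0 k : part_len k <= part_len 0.
Proof.
rewrite /part_len expr0 mulr1 ler_pM2r ?subr_gt0// ger_pMr//.
by rewrite exprn_ile1// ltW.
Qed.

Lemma part_pt0 : part_pt 0 = 0.
Proof. by rewrite /part_pt expr0 mulr1 subrr. Qed.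

Lemma part_pt_ge0 k : 0 <= part_pt k.
Proof. by rewrite /part_pt subr_ge0 ger_pMr// exprn_ile1// ltW. Qed.

Lemma part_pt_ltb k : part_pt k < b.
Proof. by rewrite /part_pt ltrBlDr ltrDl mulr_gt0// exprn_gt0. Qed.

Lemma part_pt_ltS k : part_pt k < part_pt k.+1.
Proof. by rewrite -subr_gt0 part_ptS part_len_gt0. Qed.

Lemma part_pt_le i j : (i <= j)%N -> part_pt i <= part_pt j.
Proof.
move=> ij; rewrite -subr_ge0 -(telescope_sumr _ ij) sumr_ge0// => k _.
by rewrite part_ptS ltW ?part_len_gt0.
Qed.

Lemma part_pt_itv k : 0 <= part_pt k <= b.
Proof. by rewrite part_pt_ge0 ltW ?part_pt_ltb. Qed.

Lemma part_cover x : 0 <= x -> x < b -> exists k, part_pt k <= x < part_pt k.+1.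
Proof.
move=> x0 xb.
have e0 : 0 < (b - x) / b by rewrite divr_gt0// subr_gt0.
have : \forall n \near \oo, `|0 - rho ^+ n| < (b - x) / b.
  have rho1' : `|rho| < 1 by rewrite ger0_norm ?ltW.
  by have /cvgrPdist_lt := cvg_expr rho1'; apply.
case=> N _ /(_ N.+1 (leqnSn N)); rewrite sub0r normrN ger0_norm ?exprn_ge0 ?ltW//.
rewrite ltr_pdivlMr// mulrC => bN.
pose P n := b * rho ^+ n.+1 < b - x.
have [k Pk mink] := ex_minnP (ex_intro P N bN).
exists k; rewrite /part_pt; apply/andP; split; last by move: Pk; rewrite /P; lra.
case: k Pk mink => [|k] Pk mink; first by rewrite expr0 mulr1; lra.
have : ~~ P k by apply/negP => /mink; rewrite ltnn.
by rewrite /P -leNgt; lra.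
Qed.

Definition part_slope k := - slope f (part_pt k) (part_pt k.+1).

Definition part_bound k := std_gauss (part_pt k) * std_gauss (f (part_pt k.+1)) *
  Num.sqrt (1 + part_slope k.+1 ^+ 2).

Lemma part_bound_ge0 k : 0 <= part_bound k.
Proof. by rewrite /part_bound !mulr_ge0 ?std_gauss_ge0 ?sqrtr_ge0. Qed.

Hypotheses (f_concave : concave_on 0 b f)
  (f_ge0 : forall x, 0 <= x <= b -> 0 <= f x)
  (f_max0 : forall x, 0 <= x <= b -> f x <= f 0).

Lemma part_f_le i j : (i <= j)%N -> f (part_pt j) <= f (part_pt i).
Proof.
move=> ij; apply: (concave_nonincreasing f_concave f_max0).
- exact: part_pt_ge0.
- exact: part_pt_le.
- exact/ltW/part_pt_ltb.
Qed.

Lemma part_slope_ge0 k : 0 <= part_slope k.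
Proof.
rewrite /part_slope oppr_ge0; apply: (concave_slope_le0 f_concave f_max0).
- exact: part_pt_ge0.
- exact: part_pt_ltS.
- exact/ltW/part_pt_ltb.
Qed.

Lemma part_slope_le i j : (i <= j)%N -> part_slope i <= part_slope j.
Proof.
move=> ij; rewrite -subr_ge0 -(telescope_sumr _ ij) sumr_ge0// => k _.
rewrite subr_ge0 lerN2.
have [a1 a2] := concave_slope_le f_concave (part_pt_ge0 k) (part_pt_ltS k)
  (part_pt_ltS k.+1) (ltW (part_pt_ltb _)).
exact: le_trans a2 a1.
Qed.

Local Notation x := part_pt.
Local Notation w := part_len.
Local Notation s := part_slope.
Local Notation c := part_bound.

Lemma part_head_sum_le m : (forall k, (k < m)%N -> s k.+1 <= 1) ->
  \sum_(0 <= k < m) c k * w k <=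
  Num.sqrt 2 * std_gauss (f (x m)) * (std_gauss_int (x m) + w 0).
Proof.
move=> s_le1.
pose H k := std_gauss_int (x k) - w 0 * std_gauss (x k).
have step k : std_gauss (x k) * w k <= H k.+1 - H k.
  have := std_gauss_int_increment (part_pt_ge0 k) (ltW (part_pt_ltS k)).
  rewrite part_ptS => inc.
  have : w k * (std_gauss (x k) - std_gauss (x k.+1)) <=
         w 0 * (std_gauss (x k) - std_gauss (x k.+1)).
    rewrite ler_wpM2r ?part_len_le0// subr_ge0.
    exact: std_gauss_le (part_pt_ge0 k) (ltW (part_pt_ltS k)).
  by rewrite /H; lra.
apply: (@le_trans _ _
  (\sum_(0 <= k < m) std_gauss (f (x m)) * Num.sqrt 2 * (H k.+1 - H k))).
  apply: ler_sum_nat => k /andP[_ km].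
  have -> : c k * w k = std_gauss (f (x k.+1)) * Num.sqrt (1 + s k.+1 ^+ 2) *
    (std_gauss (x k) * w k) by rewrite /part_bound; ring.
  apply: ler_pM => //.
  - by rewrite mulr_ge0 ?std_gauss_ge0 ?sqrtr_ge0.
  - by rewrite mulr_ge0 ?std_gauss_ge0 ?(ltW (part_len_gt0 _)).
  apply: ler_pM; rewrite ?std_gauss_ge0 ?sqrtr_ge0//.
    apply: std_gauss_le; first exact: f_ge0 (part_pt_itv _).
    exact: part_f_le.
  have := s_le1 _ km; have := part_slope_ge0 k.+1; move: (s k.+1) => t t0 t1.
  by apply: ler_wsqrtr; rewrite lerD2l expr_le1.
rewrite -mulr_sumr telescope_sumr// [_ * Num.sqrt 2]mulrC.
rewrite ler_wpM2l ?mulr_ge0 ?sqrtr_ge0 ?std_gauss_ge0//.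
rewrite /H part_pt0 std_gauss_int0 std_gauss0.
by have := part_len_gt0 0; have := std_gauss_ge0 (x m); nra.
Qed.

Lemma part_slope_mul_len k : s k * w k = f (x k) - f (x k.+1).
Proof.
rewrite /part_slope /slope part_ptS mulNr -mulrA mulVf ?mulr1 ?opprB//.
exact/lt0r_neq0/part_len_gt0.
Qed.

Lemma part_tail_sum_le m N : (m <= N)%N -> (forall k, (m <= k < N)%N -> 1 <= s k.+1) ->
  \sum_(m <= k < N) c k * w k <=
  Num.sqrt 2 / rho * std_gauss (x m) * std_gauss_int (f (x m)).
Proof.
move=> mN s_ge1; pose F k := - std_gauss_int (f (x k.+1)).
have f_ge0' k : 0 <= f (x k) by exact: f_ge0 (part_pt_itv _).
apply: (@le_trans _ _
  (\sum_(m <= k < N) Num.sqrt 2 / rho * std_gauss (x m) * (F k.+1 - F k))).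
  apply: ler_sum_nat => k /andP[mk kN]; rewrite /F opprK addrC.
  have sk : 1 <= s k.+1 by apply: s_ge1; rewrite mk kN.
  have sw : s k.+1 * w k = (f (x k.+1) - f (x k.+2)) / rho.
    by rewrite -part_slope_mul_len part_lenS; field; rewrite gt_eqF.
  have sqrt_le : Num.sqrt (1 + s k.+1 ^+ 2) <= Num.sqrt 2 * s k.+1.
    have -> : Num.sqrt 2 * s k.+1 = Num.sqrt (2 * s k.+1 ^+ 2).
      by rewrite sqrtrM// sqrtr_sqr ger0_norm// (le_trans ler01).
    by apply: ler_wsqrtr; rewrite !expr2; nra.
  have inc := std_gauss_int_increment (f_ge0' k.+2) (part_f_le (leqnSn k.+1)).
  apply: (@le_trans _ _ (std_gauss (x k) * std_gauss (f (x k.+1)) *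
                         (Num.sqrt 2 * s k.+1) * w k)).
    rewrite /part_bound ler_wpM2r ?(ltW (part_len_gt0 _))// ler_wpM2l//.
    by rewrite mulr_ge0 ?std_gauss_ge0.
  have -> : std_gauss (x k) * std_gauss (f (x k.+1)) * (Num.sqrt 2 * s k.+1) * w k =
      Num.sqrt 2 / rho * std_gauss (x k) *
      ((f (x k.+1) - f (x k.+2)) * std_gauss (f (x k.+1))).
    by rewrite -[LHS]mulrA -[in LHS](mulrA (Num.sqrt 2)) sw; ring.
  apply: ler_pM => //.
  - by rewrite mulr_ge0 ?std_gauss_ge0// divr_ge0// ltW.
  - by rewrite mulr_ge0 ?std_gauss_ge0// subr_ge0 part_f_le.
  rewrite ler_wpM2l ?divr_ge0 ?sqrtr_ge0 ?(ltW rho0)//.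
  exact: std_gauss_le (part_pt_ge0 _) (part_pt_le mk).
have c0 : 0 <= Num.sqrt 2 / rho * std_gauss (x m).
  by rewrite mulr_ge0 ?std_gauss_ge0// divr_ge0// ltW.
rewrite -mulr_sumr telescope_sumr// ler_wpM2l//.
have := std_gauss_int_ge0 (f_ge0' N.+1).
have := std_gauss_int_le (f_ge0' m.+1) (part_f_le (leqnSn m)).
by rewrite /F; lra.
Qed.

Lemma part_sum_le N :
  \sum_(0 <= k < N) c k * w k <= Num.sqrt 2 * (Num.sqrt (pi / 2) / rho + w 0).
Proof.
pose P k := (N <= k)%N || (1 < s k.+1).
have PN : P N by rewrite /P leqnn.
have [m Pm minm] := ex_minnP (ex_intro P N PN).
have mN : (m <= N)%N by apply: minm; rewrite /P leqnn.
have head k : (k < m)%N -> s k.+1 <= 1.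
  move=> km; rewrite leNgt; apply: contraTN km => sk.
  by rewrite -leqNgt minm// /P sk orbT.
have tail k : (m <= k < N)%N -> 1 <= s k.+1.
  case/andP=> mk kN; case/orP: Pm => [Nm|sm].
    by move: (leq_trans Nm mk); rewrite leqNgt kN.
  exact/ltW/(lt_le_trans sm)/part_slope_le.
rewrite (big_cat_nat (leq0n m) mN) /=.
apply: le_trans (lerD (part_head_sum_le head) (part_tail_sum_le mN tail)) _.
have fm0 : 0 <= f (x m) by exact: f_ge0 (part_pt_itv _).
have two := std_gauss_two_point (part_pt_ge0 m) fm0.
have := std_gauss_le1 (f (x m)); have := std_gauss_ge0 (f (x m)).
have := std_gauss_int_ge0 (part_pt_ge0 m); have := std_gauss_int_ge0 fm0.
have := std_gauss_ge0 (x m); have := part_len_gt0 0.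
move: (std_gauss (f (x m))) (std_gauss (x m)) (std_gauss_int (x m))
  (std_gauss_int (f (x m))) two => Ef Ex Gx Gf two w0 Ex0 Gf0 Gx0 Ef0 Ef1.
have -> : Num.sqrt 2 * Ef * (Gx + w 0) + Num.sqrt 2 / rho * Ex * Gf =
  Num.sqrt 2 * (Ef * Gx + Ef * w 0 + Ex * Gf / rho) by ring.
rewrite ler_wpM2l//.
have : Ef * Gx <= Ef * Gx / rho by rewrite ler_pdivlMr// ler_piMr ?mulr_ge0// ltW.
have : (Ef * Gx + Ex * Gf) / rho <= Num.sqrt (pi / 2) / rho by rewrite ler_pM2r ?invr_gt0.
rewrite mulrDl; have : Ef * w 0 <= w 0 by rewrite ler_piMl// ltW.
lra.
Qed.

Lemma gauss_length_density_le k t : 0 < t -> x k <= t < x k.+1 ->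
  gauss_length_density f t <= c k.
Proof.
move=> t0 /andP[xkt txk]; have tb : t <= b by exact/ltW/(lt_trans txk)/part_pt_ltb.
rewrite /gauss_length_density.
have -> : expR (- ((t ^+ 2 + f t ^+ 2) / 2)) = std_gauss t * std_gauss (f t).
  by rewrite -expRD mulrDl opprD.
apply: ler_pM; rewrite ?mulr_ge0 ?std_gauss_ge0 ?sqrtr_ge0//.
  apply: ler_pM; rewrite ?std_gauss_ge0//; first exact: std_gauss_le (part_pt_ge0 _) _.
  apply: std_gauss_le; first exact: f_ge0 (part_pt_itv _).
  apply: (concave_nonincreasing f_concave f_max0); rewrite ?ltW//.
  exact: part_pt_ltb.
apply: ler_wsqrtr; rewrite lerD2l /part_slope sqrrN.
apply: (concave_derive1_sqr_le f_concave f_max0) t0 txk (part_pt_ltS _) _.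
exact/ltW/part_pt_ltb.
Qed.

End geometric_partition.

(* The integral of a nonnegative function is a supremum over the simple
   functions below it, so no measurability is needed. *)
Lemma ge0_le_integral_nomeas d (T : measurableType d) (R : realType)
    (mu : {measure set T -> \bar R}) (D : set T) (f g : T -> \bar R) :
  measurable D -> (forall x, D x -> (0 <= f x)%E) ->
  (forall x, D x -> (f x <= g x)%E) ->
  (\int[mu]_(x in D) f x <= \int[mu]_(x in D) g x)%E.
Proof.
move=> mD f0 fg.
have g0 x : D x -> (0 <= g x)%E by move=> Dx; exact: le_trans (f0 x Dx) (fg x Dx).
rewrite !ge0_integralE//; apply: ereal_sup_le => _ [h hf <-]; exists h => //= x.
apply: le_trans (hf x) _; rewrite /patch; case: ifP => // /set_mem Dx.
exact: fg.
Qed.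

Lemma integral_cst_indic d (T : measurableType d) (R : realType)
    (mu : {measure set T -> \bar R}) (D A : set T) (c : R) :
  measurable D -> measurable A -> 0 <= c ->
  (\int[mu]_(x in D) (c * \1_A x)%:E = c%:E * mu (A `&` D))%E.
Proof.
move=> mD mA c0; under eq_integral do rewrite EFinM.
by rewrite ge0_integralZl_EFin ?integral_indic//; exact/measurable_EFinP/measurable_indic.
Qed.

Section integral_itv.
Context {R : realType}.
Local Notation mu := (@lebesgue_measure R).

Lemma integral_cst_indic_set1 (D : set R) (c r : R) : measurable D -> 0 <= c ->
  (\int[mu]_(x in D) (c * \1_[set r] x)%:E = 0)%E.
Proof.
move=> mD c0; rewrite integral_cst_indic// [X in (_ * X)%E](_ : _ = 0%E) ?mule0//.
by apply: (subset_measure0 _ _ _ (lebesgue_measure_set1 r)) => //; exact: measurableI.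
Qed.

(* No measurability of [F] is needed: on the segment, [F] is dominated by [g]
   plus multiples of the indicators of the two endpoints. *)
Lemma integral_itvcc_le (F : R -> R) (g : R -> \bar R) (a b : R) :
  (forall x, 0 <= F x) -> measurable_fun `[a, b] g -> (forall x, (0 <= g x)%E) ->
  (forall x, a < x < b -> ((F x)%:E <= g x)%E) ->
  (\int[mu]_(x in `[a, b]) (F x)%:E <= \int[mu]_(x in `[a, b]) g x)%E.
Proof.
move=> F0 mg g0 Fg.
pose T x := ((F a * \1_[set a] x)%:E + (F b * \1_[set b] x)%:E)%E.
have ind0 (r x : R) c : 0 <= c -> (0 <= (c * \1_[set r] x)%:E)%E.
  by move=> c0; rewrite lee_fin mulr_ge0// indicE; case: (_ \in _).
have mind (r c : R) : measurable_fun `[a, b] (fun x => (c * \1_[set r] x)%:E).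
  by apply/measurable_EFinP/measurable_funM => //; exact: measurable_indic.
have T0 x : (0 <= T x)%E by rewrite adde_ge0 ?ind0.
have mT : measurable_fun `[a, b] T by apply: emeasurable_funD.
apply: (@le_trans _ _ (\int[mu]_(x in `[a, b]) (g x + T x))%E).
  apply: ge0_le_integral_nomeas => // x; first by rewrite lee_fin.
  rewrite /= in_itv/= => /andP[ax xb].
  have [<-|xa] := eqVneq a x.
    by apply: lee_paddl => //; rewrite lee_paddr ?ind0// indicE mem_set// mulr1.
  have [<-|xb'] := eqVneq b x.
    by apply: lee_paddl => //; rewrite lee_paddl ?ind0// indicE mem_set// mulr1.
  by apply: lee_paddr => //; apply: Fg; rewrite !lt_neqAle xa eq_sym xb' ax xb.
rewrite ge0_integralD// ge0_integralD//;
  [|by move=> *; exact: ind0|exact: mind|by move=> *; exact: ind0|exact: mind].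
by rewrite !integral_cst_indic_set1// !adde0.
Qed.

End integral_itv.

Section gauss_length_bound.
Variables (R : realType) (b : R) (f : R -> R).
Hypotheses (b0 : 0 < b) (f_concave : concave_on 0 b f)
  (f_ge0 : forall x, 0 <= x <= b -> 0 <= f x)
  (f_max0 : forall x, 0 <= x <= b -> f x <= f 0).

Lemma gauss_length_le rho : 0 < rho -> rho < 1 ->
  (\int[lebesgue_measure]_(x in `[0%R, b]) (gauss_length_density f x)%:E <=
   (Num.sqrt 2 * (Num.sqrt (pi / 2) / rho + part_len b rho 0))%:E)%E.
Proof.
move=> rho0 rho1.
pose piece k := `[part_pt b rho k, part_pt b rho k.+1[%classic.
pose step k x := (part_bound b rho f k * \1_(piece k) x)%:E.
have step0 k x : (0 <= step k x)%E.
  by rewrite lee_fin mulr_ge0 ?part_bound_ge0// indicE; case: (_ \in _).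
have mstep k : measurable_fun `[0%R, b] (step k).
  apply/measurable_EFinP/measurable_funM; first exact: measurable_cst.
  by apply: measurable_indic; exact: measurable_itv.
have int_step k :
    (\int[lebesgue_measure]_(x in `[0%R, b]) step k x =
     (part_bound b rho f k * part_len b rho k)%:E)%E.
  rewrite integral_cst_indic ?part_bound_ge0//; last exact: measurable_itv.
  rewrite /piece setIidl; last first.
    move=> x /=; rewrite !in_itv/= => /andP[xk xk1].
    rewrite (le_trans (part_pt_ge0 b0 rho0 rho1 k))//.
    by rewrite ltW// (lt_trans xk1)// part_pt_ltb.
  rewrite [X in (_ * X)%E](_ : _ = (part_len b rho k)%:E) ?EFinM//.
  apply: etrans (lebesgue_measure_itv _) _.
  by rewrite /= lte_fin part_pt_ltS// -EFinB part_ptS.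
(* At the endpoints, [derive1 f] depends on [f] outside [[0, b]]. *)
have le_series : (\int[lebesgue_measure]_(x in `[0%R, b]) (gauss_length_density f x)%:E <=
    \int[lebesgue_measure]_(x in `[0%R, b]) \sum_(0 <= k <oo) step k x)%E.
  apply: integral_itvcc_le => [x|||x /andP[x0 xb]].
  - exact: gauss_length_density_ge0.
  - exact: ge0_emeasurable_sum.
  - by move=> x; apply: nneseries_ge0 => n _ _.
  have [j /andP[xj xj1]] := part_cover b0 rho0 rho1 (ltW x0) xb.
  apply: le_trans (nneseries_lim_ge j.+1 (fun n _ _ => step0 n x)).
  rewrite big_nat_recr//= lee_paddl ?sume_ge0// /step indicE mem_set ?mulr1; last first.
    by rewrite /piece /= in_itv/= xj xj1.
  rewrite lee_fin (gauss_length_density_le b0 rho0 rho1 f_concave f_ge0 f_max0 x0)//.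
  by rewrite xj xj1.
apply: le_trans le_series _; rewrite integral_nneseries//.
under eq_eseriesr do rewrite int_step.
apply: lime_le.
  apply: is_cvg_nneseries => n _ _.
  by rewrite lee_fin mulr_ge0 ?part_bound_ge0 ?(ltW (part_len_gt0 _ _ _ _)).
near=> N; rewrite sumEFin lee_fin.
exact: part_sum_le.
Unshelve. all: end_near. Qed.

End gauss_length_bound.

Lemma exists_rho_inv_onem_le (R : realFieldType) (P c e : R) :
  0 <= P -> 0 <= c -> 0 < e ->
  exists2 rho, 0 < rho < 1 & P / rho + c * (1 - rho) <= P + e.
Proof.
move=> P0 c0 e0; have D0 : 0 < 2 * P + c + 1 by lra.
pose d := Num.min (1 / 2) (e / (2 * P + c + 1)).
have d0 : 0 < d by rewrite lt_min divr_gt0//= divr_gt0.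
have d1 : d <= 1 / 2 by rewrite ge_min lexx.
have de : d * (2 * P + c + 1) <= e by rewrite -ler_pdivlMr// ge_min lexx orbT.
exists (1 - d); first by apply/andP; split; lra.
have : P / (1 - d) <= P * (1 + 2 * d).
  rewrite ler_pdivrMr; last by lra.
  have : 1 <= (1 + 2 * d) * (1 - d) by nra.
  nra.
nra.
Qed.

Unset Implicit Arguments. Set Strict Implicit.

Theorem mainTheorem13 (R : realType) (b : R) (f : R -> R) :
  0 < b ->
  concave_on 0 b f ->
  (forall x, 0 <= x <= b -> 0 <= f x) ->
  f b = 0 ->
  0 < f 0 ->
  (forall x, 0 <= x <= b -> f x <= f 0) ->
  (\int[lebesgue_measure]_(x in `[0%R, b])
     (expR (- ((x ^+ 2 + f x ^+ 2) / 2)) * Num.sqrt (1 + (derive1 f x) ^+ 2))%:E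
   <= (Num.sqrt pi)%:E)%E.
Proof.
move=> b0 f_concave f_ge0 _ _ f_max0; apply/lee_addgt0Pr => e e0.
have [rho /andP[rho0 rho1] le_e] :=
  @exists_rho_inv_onem_le R (Num.sqrt pi) (Num.sqrt 2 * b) e
    (sqrtr_ge0 _) (mulr_ge0 (sqrtr_ge0 _) (ltW b0)) e0.
apply: le_trans (gauss_length_le b0 f_concave f_ge0 f_max0 rho0 rho1) _.
have sqrt_pi : Num.sqrt 2 * Num.sqrt (pi / 2) = Num.sqrt pi :> R.
  by rewrite -sqrtrM// mulrC divfK.
rewrite -EFinD lee_fin; apply: le_trans le_e.
by rewrite /part_len expr0 mulr1 mulrDr mulrA sqrt_pi; lra.
Qed.
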